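(* Consider the perturbed Collins First Form $$\dot x=-y+x^2y+\varepsilon\sum_{0\le i+j\le3}a_{i,j}x^iy^j,\qquad \dot y=x+xy^2+\varepsilon\sum_{0\le i+j\le3}b_{i,j}x^iy^j,$$ with real coefficients. Then the unperturbed equation is $dr/d\theta=r^3\cos\theta\sin\theta$, whose solution with $r(0)=z$ is $r(\theta,z)=z/\sqrt{1-z^2\sin^2\theta}$, which is $2\pi$-periodic and positive exactly for $z\in D=(0,1)$, and the first order averaged function $f_1$ satisfies, for $z\in(0,1)$ and $s=\sqrt{1-z^2}\in(0,1)$, $$z\,f_1(z)=\pi(1-s)\Big((b_{0,1}-b_{0,3}-b_{2,1})s^3+(b_{0,1}-2a_{3,0}-b_{0,3}+b_{2,1})s^2+(a_{1,0}-a_{1,2}+a_{3,0}+2b_{0,3})s+a_{1,0}+a_{1,2}+a_{3,0}\Big).$$ In particular, $f_1$ has at most $3$ simple zeros in $(0,1)$, and there are coefficient choices for which it has exactly $3$; hence first order averaging yields at most three limit cycles of this system, and three is reached.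
   Context: Averaging framework (first order): in polar coordinates $x=r\cos\theta,y=r\sin\theta$, write $dr/d\theta=F_0(\theta,r)+\varepsilon F_1(\theta,r)+O(\varepsilon^2)$; let $r(\theta,z)$ solve $dr/d\theta=F_0$ with $r(0,z)=z$ and $Y(\theta,z)$ solve $Y'=\partial_rF_0(\theta,r(\theta,z))Y$, $Y(0,z)=1$. The first order averaged function is $f_1(z)=Y(2\pi,z)\int_0^{2\pi}Y(s,z)^{-1}F_1(s,r(s,z))\,ds$. Each simple zero of $f_1$ in $D$ gives, for $|\varepsilon|$ small, a limit cycle bifurcating from a periodic orbit of the unperturbed center. *)

From Stdlib Require Import Reals Lra.
From Coquelicot Require Import Coquelicot.
Open Scope R_scope.

Definition cubic_pert (c : nat -> nat -> R) (x y : R) : R :=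
  sum_f_R0 (fun i => sum_f_R0 (fun j => c i j * x ^ i * y ^ j) (3 - i)) 3.

Definition collinsP (a : nat -> nat -> R) (eps x y : R) : R :=
  - y + x ^ 2 * y + eps * cubic_pert a x y.
Definition collinsQ (b : nat -> nat -> R) (eps x y : R) : R :=
  x + x * y ^ 2 + eps * cubic_pert b x y.

(* dr/dtheta in polar coordinates x = r cos th, y = r sin th:
   dr/dth = (dr/dt)/(dth/dt) = r (x P + y Q) / (x Q - y P). *)
Definition Fpolar (a b : nat -> nat -> R) (th r eps : R) : R :=
  let x := r * cos th in
  let y := r * sin th in
  let P := collinsP a eps x y in
  let Q := collinsQ b eps x y in
  r * (x * P + y * Q) / (x * Q - y * P).

(* F0 and F1 : coefficients of eps^0 and eps^1 in the expansion in eps. *)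
Definition F0 (th r : R) : R := Fpolar (fun _ _ => 0) (fun _ _ => 0) th r 0.
Definition F1 (a b : nat -> nat -> R) (th r : R) : R :=
  Derive (fun eps => Fpolar a b th r eps) 0.

(* First order averaged function, built from the solution r(th,z) of
   dr/dth = F0 with r(0,z) = z and the solution Y(th,z) of the variational
   equation Y' = d_r F0(th, r(th,z)) Y, Y(0,z) = 1. *)
Definition f1 (a b : nat -> nat -> R) (rr Y : R -> R -> R) (z : R) : R :=
  Y (2 * PI) z * RInt (fun s => / Y s z * F1 a b s (rr s z)) 0 (2 * PI).

Definition rsol (th z : R) : R := z / sqrt (1 - z ^ 2 * (sin th) ^ 2).

Definition simple_zero (f : R -> R) (z : R) : Prop :=
  f z = 0 /\ exists l, is_derive f z l /\ l <> 0.

Definition f1_formula (a b : nat -> nat -> R) (z : R) : R :=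
  let s := sqrt (1 - z ^ 2) in
  PI * (1 - s) *
   ((b 0%nat 1%nat - b 0%nat 3%nat - b 2%nat 1%nat) * s ^ 3
    + (b 0%nat 1%nat - 2 * a 3%nat 0%nat - b 0%nat 3%nat + b 2%nat 1%nat) * s ^ 2
    + (a 1%nat 0%nat - a 1%nat 2%nat + a 3%nat 0%nat + 2 * b 0%nat 3%nat) * s
    + a 1%nat 0%nat + a 1%nat 2%nat + a 3%nat 0%nat).

From Stdlib Require Import Reals Lra Lia List.
From Coquelicot Require Import Coquelicot.
Open Scope R_scope.

(* 1. In polar coordinates the unperturbed equation is dr/dth = r^3 cos th sin th
      (F0_polar), with first order term F1 given by F1_polar.  Its solution
      through z is rsol = z / W, W = sqrt (1 - z^2 sin^2 th), for z in (0,1).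
   2. Solutions of the initial value problems are unique (integrating factor,
      linear_ode_zero), so r(th,z) = rsol and Y(th,z) = W^{-3}; hence
      f1(z) = int_0^{2PI} W^3 F1(th, z/W) dth.
   3. The integral of a continuous 2PI-periodic function is invariant under
      th -> -th, PI - th, PI + th.  Averaging the integrand over these symmetries
      leaves alpha / (1 - z^2 sin^2) + beta + gamma cos 2th, integrated with an
      explicit atan primitive: f1(z) = 2PI (alpha / sqrt (1 - z^2) + beta).
   4. Thus f1(z) = PI (1 - s) Pc(s) / z with Pc cubic and s = sqrt (1 - z^2)
      injective on (0,1).  Four simple zeros would make Pc identically zero,
      hence f1 = 0 near them; an explicit Pc with roots 5/13, 3/5, 4/5 gives
      exactly three simple zeros. *)

(** * Polar form of the Collins First Form *)

Lemma cos_sin_sq th : cos th ^ 2 + sin th ^ 2 = 1.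
Proof. rewrite <- (sin2_cos2 th). unfold Rsqr. ring. Qed.

(* Since x' y - y' x = r^2 for the unperturbed field, the radial equation
   reduces to dr/dth = r^3 cos th sin th. *)
Lemma F0_polar th r : F0 th r = r ^ 3 * cos th * sin th.
Proof.
  unfold F0, Fpolar, collinsP, collinsQ. cbv zeta.
  destruct (Req_dec r 0) as [->|Hr].
  - unfold Rdiv. ring.
  - match goal with |- ?N / ?D = _ =>
      replace D with (r ^ 2 * (cos th ^ 2 + sin th ^ 2)) by ring;
      replace N with (r ^ 5 * cos th * sin th * (cos th ^ 2 + sin th ^ 2)) by ring
    end.
    rewrite cos_sin_sq. field. exact Hr.
Qed.

Lemma F0_derive th r : Derive (fun r => F0 th r) r = 3 * r ^ 2 * cos th * sin th.
Proof.
  apply is_derive_unique.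
  apply is_derive_ext with (f := fun r => r ^ 3 * cos th * sin th).
  { intros; symmetry; apply F0_polar. }
  auto_derive; auto. ring.
Qed.

Lemma F1_polar a b th r : r <> 0 ->
  F1 a b th r = cos th * cubic_pert a (r * cos th) (r * sin th)
     + sin th * cubic_pert b (r * cos th) (r * sin th)
     - r ^ 2 * cos th * sin th * (cos th * cubic_pert b (r * cos th) (r * sin th)
                                  - sin th * cubic_pert a (r * cos th) (r * sin th)).
Proof.
  intro Hr. unfold F1. apply is_derive_unique.
  unfold Fpolar, collinsP, collinsQ. cbv zeta.
  set (A := cubic_pert a (r * cos th) (r * sin th)).
  set (B := cubic_pert b (r * cos th) (r * sin th)).
  set (c := cos th). set (s := sin th).
  assert (Hcs : c ^ 2 + s ^ 2 = 1) by apply cos_sin_sq.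
  auto_derive.
  - match goal with |- ?D <> 0 => replace D with (r ^ 2 * (c ^ 2 + s ^ 2)) by ring end.
    rewrite Hcs, Rmult_1_r. now apply pow_nonzero.
  - match goal with |- _ * / ?D + _ = _ => replace D with (r ^ 2 * (c ^ 2 + s ^ 2)) by ring end.
    match goal with |- ?x = ?y => change (@eq R x y) end.
    match goal with |- _ + r * ?N0 * _ = _ =>
      replace N0 with (r ^ 4 * c * s * (c ^ 2 + s ^ 2)) by ring end.
    rewrite Hcs. field. exact Hr.
Qed.

Definition W (z th : R) : R := sqrt (1 - z ^ 2 * sin th ^ 2).

Lemma rsol_W th z : rsol th z = z / W z th.
Proof. reflexivity. Qed.

Lemma radicand_pos z th : 0 < z < 1 -> 0 < 1 - z ^ 2 * sin th ^ 2.
Proof.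
  intros Hz. pose proof (cos_sin_sq th). pose proof (pow2_ge_0 (cos th)).
  pose proof (pow2_ge_0 (sin th)). nra.
Qed.

Lemma W_pos z th : 0 < z < 1 -> 0 < W z th.
Proof. intros Hz. apply sqrt_lt_R0, radicand_pos, Hz. Qed.

Lemma W_sq z th : 0 < z < 1 -> W z th ^ 2 = 1 - z ^ 2 * sin th ^ 2.
Proof. intros Hz. apply pow2_sqrt. pose proof (radicand_pos z th Hz). lra. Qed.

Lemma W_0 z : W z 0 = 1.
Proof. unfold W. rewrite sin_0. replace (1 - z ^ 2 * 0 ^ 2) with 1 by ring. apply sqrt_1. Qed.

Lemma sin_2PI_periodic th : sin (th + 2 * PI) = sin th.
Proof. rewrite sin_plus, sin_2PI, cos_2PI. ring. Qed.

Lemma cos_2PI_periodic th : cos (th + 2 * PI) = cos th.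
Proof. rewrite cos_plus, sin_2PI, cos_2PI. ring. Qed.

Lemma W_periodic z th : W z (th + 2 * PI) = W z th.
Proof. unfold W. now rewrite sin_2PI_periodic. Qed.

Lemma rsol_0 z : rsol 0 z = z.
Proof. rewrite rsol_W, W_0. field. Qed.

Lemma rsol_solves z th : 0 < z < 1 ->
  is_derive (fun t => rsol t z) th (F0 th (rsol th z)).
Proof.
  intros Hz. rewrite F0_polar. unfold rsol.
  pose proof (radicand_pos z th Hz) as Hq.
  pose proof (W_pos z th Hz) as Hw. pose proof (W_sq z th Hz) as Hw2. unfold W in Hw, Hw2.
  auto_derive;
    replace (1 + - (z * (z * 1) * (sin th * (sin th * 1)))) with (1 - z ^ 2 * sin th ^ 2) by ring.
  - repeat split; lra.
  - match goal with |- ?x = ?y => change (@eq R x y) end.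
    field. lra.
Qed.

(* The solution is defined and positive along the whole orbit iff z is in (0,1);
   for the converse, evaluate at th = PI/2. *)
Lemma rsol_domain z :
  (0 < z < 1) <-> (forall th, 0 < 1 - z ^ 2 * sin th ^ 2 /\ 0 < rsol th z).
Proof.
  split.
  - intros Hz th. split; [now apply radicand_pos|].
    rewrite rsol_W. apply Rdiv_lt_0_compat; [lra | now apply W_pos].
  - intros H. destruct (H (PI / 2)) as [H1 H2].
    rewrite rsol_W in H2. unfold W in *. rewrite sin_PI2 in H1, H2.
    pose proof (sqrt_lt_R0 _ H1) as Hw.
    assert (Hz : 0 < z).
    { replace z with (z / sqrt (1 - z ^ 2 * 1 ^ 2) * sqrt (1 - z ^ 2 * 1 ^ 2)) by (field; lra).
      now apply Rmult_lt_0_compat. }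
    split; [exact Hz | nra].
Qed.

(** * Uniqueness of the solutions of the initial value problems *)

Lemma derive_zero_const (f : R -> R) :
  (forall x, is_derive f x 0) -> forall a b, f a = f b.
Proof.
  intros H a b.
  pose proof (is_RInt_derive f (fun _ => 0) a b (fun x _ => H x)
     (fun x _ => continuous_const (U:=R_UniformSpace) (0:R) x)) as HI.
  apply is_RInt_unique in HI. rewrite RInt_const in HI.
  unfold minus, plus, opp, scal in HI; simpl in HI. unfold mult in HI; simpl in HI.
  lra.
Qed.

(* A solution of a linear equation d' = g d with continuous g that vanishes at
   0 vanishes everywhere: d exp(- int_0^t g) has zero derivative. *)
Lemma linear_ode_zero (g d : R -> R) :
  (forall t, continuous g t) -> (forall t, is_derive d t (g t * d t)) ->
  d 0 = 0 -> forall t, d t = 0.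
Proof.
  intros Hg Hd H0.
  set (G := fun t => RInt g 0 t).
  assert (HG : forall t, is_derive G t (g t)).
  { intro t. apply is_derive_RInt with (a := 0); auto.
    apply filter_forall. intro u. apply RInt_correct.
    apply ex_RInt_continuous. intros; apply Hg. }
  set (h := fun t => d t * exp (- G t)).
  assert (Hh : forall t, is_derive h t 0).
  { intro t. unfold h. auto_derive.
    - repeat split; eexists; eauto.
    - assert (Dd : Derive (fun x => d x) t = g t * d t) by now apply is_derive_unique.
      assert (DG : Derive (fun x => G x) t = g t) by now apply is_derive_unique.
      rewrite Dd, DG. ring. }
  intro t. pose proof (derive_zero_const h Hh t 0) as E.
  unfold h in E. rewrite H0, Rmult_0_l in E. pose proof (exp_pos (- G t)).
  apply Rmult_integral in E. destruct E; lra.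
Qed.

(* Two solutions of r' = r^3 cos t sin t with the same initial value coincide:
   their difference solves a linear equation. *)
Lemma radial_ode_unique (v u : R -> R) :
  (forall t, is_derive v t (v t ^ 3 * cos t * sin t)) ->
  (forall t, is_derive u t (u t ^ 3 * cos t * sin t)) ->
  v 0 = u 0 -> forall t, v t = u t.
Proof.
  intros Hv Hu H0 t.
  set (g := fun t => cos t * sin t * (v t ^ 2 + v t * u t + u t ^ 2)).
  assert (Hgc : forall t, continuous g t).
  { intro s. apply (ex_derive_continuous (K:=R_AbsRing) (V:=R_NormedModule)). unfold g.
    auto_derive. repeat split; eexists; eauto. }
  enough (E : v t - u t = 0) by lra.
  apply (linear_ode_zero g (fun t => v t - u t) Hgc); [|lra].
  intro s. apply (is_derive_ext_loc (fun t => v t - u t)); [now apply filter_forall|].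
  replace (g s * (v s - u s)) with (v s ^ 3 * cos s * sin s - u s ^ 3 * cos s * sin s)
    by (unfold g; ring).
  apply (is_derive_minus v u s _ _ (Hv s) (Hu s)).
Qed.

(* The solution of the variational equation along the orbit through z is
   W^{-3}: the weight of F1 in the averaged function. *)
Lemma variational_solution z t : 0 < z < 1 ->
  is_derive (fun t => / W z t ^ 3) t (3 * rsol t z ^ 2 * cos t * sin t * / W z t ^ 3).
Proof.
  intros Hz. rewrite rsol_W. unfold W.
  pose proof (radicand_pos z t Hz) as Hq.
  pose proof (W_pos z t Hz) as Hw. pose proof (W_sq z t Hz) as Hw2. unfold W in Hw, Hw2.
  auto_derive;
    replace (1 + - (z * (z * 1) * (sin t * (sin t * 1)))) with (1 - z ^ 2 * sin t ^ 2) by ring.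
  - repeat split; [lra|]. apply Rgt_not_eq. repeat apply Rmult_lt_0_compat; lra.
  - match goal with |- ?x = ?y => change (@eq R x y) end.
    set (w := sqrt (1 - z ^ 2 * sin t ^ 2)) in *. field. lra.
Qed.

Lemma variational_unique z (y : R -> R) : 0 < z < 1 ->
  (forall t, is_derive y t (3 * rsol t z ^ 2 * cos t * sin t * y t)) ->
  y 0 = 1 -> forall t, y t = / W z t ^ 3.
Proof.
  intros Hz Hy H0 t.
  set (g := fun t => 3 * rsol t z ^ 2 * cos t * sin t).
  assert (Hgc : forall t, continuous g t).
  { intro s. apply (ex_derive_continuous (K:=R_AbsRing) (V:=R_NormedModule)).
    pose proof (radicand_pos z s Hz) as Hq. pose proof (sqrt_lt_R0 _ Hq).
    unfold g, rsol. auto_derive.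
    replace (1 + - (z * (z * 1) * (sin s * (sin s * 1)))) with (1 - z ^ 2 * sin s ^ 2) by ring.
    repeat split; lra. }
  enough (E : y t - / W z t ^ 3 = 0) by lra.
  apply (linear_ode_zero g (fun t => y t - / W z t ^ 3) Hgc).
  - intro s. apply (is_derive_ext_loc (fun t => y t - / W z t ^ 3)); [now apply filter_forall|].
    replace (g s * (y s - / W z s ^ 3)) with
      (3 * rsol s z ^ 2 * cos s * sin s * y s
       - 3 * rsol s z ^ 2 * cos s * sin s * / W z s ^ 3) by (unfold g; ring).
    apply (is_derive_minus y _ s _ _ (Hy s) (variational_solution z s Hz)).
  - rewrite H0, W_0. field.
Qed.

Definition ivp_solutions (rr Y : R -> R -> R) : Prop :=
  forall z, 0 < z < 1 ->
    rr 0 z = z /\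
    (forall th, is_derive (fun t => rr t z) th (F0 th (rr th z))) /\
    Y 0 z = 1 /\
    (forall th, is_derive (fun t => Y t z) th
                  (Derive (fun r => F0 th r) (rr th z) * Y th z)).

Lemma ivp_solutions_explicit rr Y z : ivp_solutions rr Y -> 0 < z < 1 ->
  (forall t, rr t z = rsol t z) /\ (forall t, Y t z = / W z t ^ 3).
Proof.
  intros H Hz. destruct (H z Hz) as [Hr0 [Hrd [HY0 HYd]]].
  assert (Hr : forall t, rr t z = rsol t z).
  { apply (radial_ode_unique (fun t => rr t z) (fun t => rsol t z)).
    - intro t. rewrite <- F0_polar. apply Hrd.
    - intro t. rewrite <- F0_polar. now apply rsol_solves.
    - now rewrite Hr0, rsol_0. }
  split; [exact Hr|].
  apply (variational_unique z (fun t => Y t z) Hz); [|exact HY0].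
  intro t. rewrite <- Hr, <- F0_derive. apply HYd.
Qed.

(** * Integrals of continuous 2PI-periodic functions *)

Section Periodic.
Variable f : R -> R.
Hypothesis f_cont : forall x, continuous f x.
Hypothesis f_per : forall x, f (x + 2 * PI) = f x.

Lemma periodic_ex_RInt a b : ex_RInt f a b.
Proof. apply (ex_RInt_continuous (V:=R_CompleteNormedModule)). intros; apply f_cont. Qed.

Lemma RInt_periodic_window a : RInt f a (a + 2 * PI) = RInt f 0 (2 * PI).
Proof.
  set (F := fun x => RInt f 0 x).
  assert (HF : forall x, is_derive F x (f x)).
  { intro x. apply is_derive_RInt with (a := 0); auto.
    apply filter_forall. intro b. apply RInt_correct. apply periodic_ex_RInt. }
  set (K := fun x => F (x + 2 * PI) - F x).
  assert (HK : forall x, is_derive K x 0).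
  { intro x. unfold K. auto_derive.
    - split; [eexists; apply HF | split; [eexists; apply HF | auto]].
    - assert (D1 : Derive (fun x => F x) (x + 2 * PI) = f (x + 2 * PI))
        by now apply is_derive_unique.
      assert (D2 : Derive (fun x => F x) x = f x) by now apply is_derive_unique.
      rewrite D1, D2, f_per. ring. }
  pose proof (derive_zero_const K HK a 0) as E. unfold K, F in E.
  rewrite Rplus_0_l, RInt_point in E.
  pose proof (RInt_Chasles f 0 a (a + 2 * PI) (periodic_ex_RInt _ _) (periodic_ex_RInt _ _)) as C.
  unfold plus, zero in *; simpl in *. unfold F. lra.
Qed.

Lemma RInt_periodic_translate a : RInt (fun t => f (t + a)) 0 (2 * PI) = RInt f 0 (2 * PI).
Proof.
  pose proof (RInt_comp_lin f 1 a 0 (2 * PI) (periodic_ex_RInt _ _)) as E.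
  rewrite <- (RInt_periodic_window a).
  replace (1 * 0 + a) with a in E by ring.
  replace (1 * (2 * PI) + a) with (a + 2 * PI) in E by ring.
  rewrite <- E. apply RInt_ext. intros x _.
  unfold scal; simpl; unfold mult; simpl. rewrite Rmult_1_l. f_equal. ring.
Qed.

Lemma RInt_periodic_opp : RInt (fun t => f (- t)) 0 (2 * PI) = RInt f 0 (2 * PI).
Proof.
  pose proof (is_RInt_comp_opp f 0 (2 * PI) _ (RInt_correct f _ _ (periodic_ex_RInt _ _)))
    as E.
  rewrite Ropp_0 in E.
  rewrite <- (opp_RInt_swap f) in E by apply periodic_ex_RInt.
  pose proof (RInt_periodic_window (- (2 * PI))) as P.
  replace (- (2 * PI) + 2 * PI) with 0 in P by ring. rewrite P in E.
  apply is_RInt_opp in E. rewrite opp_opp in E.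
  rewrite <- (is_RInt_unique _ _ _ _ E). apply RInt_ext. intros x _.
  symmetry. apply opp_opp.
Qed.

End Periodic.

Lemma continuous_affine_comp (f : R -> R) u v x :
  (forall x, continuous f x) -> continuous (fun t => f (u * t + v)) x.
Proof.
  intros Hf. apply (continuous_comp (fun t => u * t + v) f); [|apply Hf].
  apply (ex_derive_continuous (K:=R_AbsRing) (V:=R_NormedModule)). auto_derive. auto.
Qed.

(* Reflection about a/2: t -> a - t is a translation composed with t -> -t. *)
Lemma RInt_periodic_reflect (f : R -> R) a :
  (forall x, continuous f x) -> (forall x, f (x + 2 * PI) = f x) ->
  RInt (fun t => f (a - t)) 0 (2 * PI) = RInt f 0 (2 * PI).
Proof.
  intros Hc Hp. set (g := fun t => f (1 * t + a)).
  assert (Hgc : forall x, continuous g x) by (intro; now apply continuous_affine_comp).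
  assert (Hgp : forall x, g (x + 2 * PI) = g x).
  { intro x. unfold g. replace (1 * (x + 2 * PI) + a) with (1 * x + a + 2 * PI) by ring. apply Hp. }
  transitivity (RInt g 0 (2 * PI)).
  - rewrite <- (RInt_periodic_opp g Hgc Hgp).
    apply RInt_ext. intros x _. unfold g. f_equal. ring.
  - rewrite <- (RInt_periodic_translate f Hc Hp a).
    apply RInt_ext. intros x _. unfold g. f_equal. ring.
Qed.

Lemma is_RInt_continuous_value (g : R -> R) a b I :
  (forall x, continuous g x) -> RInt g a b = I -> is_RInt g a b I.
Proof.
  intros Hc <-. apply (RInt_correct (V:=R_CompleteNormedModule)).
  apply (ex_RInt_continuous (V:=R_CompleteNormedModule)). intros; apply Hc.
Qed.

Lemma RInt_periodic_symmetrize (f : R -> R) :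
  (forall x, continuous f x) -> (forall x, f (x + 2 * PI) = f x) ->
  RInt (fun t => (f t + f (PI - t) + f (- t) + f (PI + t)) / 4) 0 (2 * PI)
  = RInt f 0 (2 * PI).
Proof.
  intros Hc Hp. set (I := RInt f 0 (2 * PI)).
  assert (Haffine : forall u v, RInt (fun t => f (u * t + v)) 0 (2 * PI) = I ->
            is_RInt (fun t => f (u * t + v)) 0 (2 * PI) I).
  { intros u v. apply is_RInt_continuous_value. intro; now apply continuous_affine_comp. }
  assert (H1 : is_RInt f 0 (2 * PI) I) by now apply is_RInt_continuous_value.
  assert (H2 : is_RInt (fun t => f (PI - t)) 0 (2 * PI) I).
  { apply (is_RInt_ext (fun t => f (-1 * t + PI))); [intros; f_equal; ring|].
    apply Haffine. unfold I.
    rewrite <- (RInt_periodic_reflect f PI Hc Hp). apply RInt_ext. intros; f_equal; ring. }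
  assert (H3 : is_RInt (fun t => f (- t)) 0 (2 * PI) I).
  { apply (is_RInt_ext (fun t => f (-1 * t + 0))); [intros; f_equal; ring|].
    apply Haffine. unfold I.
    rewrite <- (RInt_periodic_opp f Hc Hp). apply RInt_ext. intros; f_equal; ring. }
  assert (H4 : is_RInt (fun t => f (PI + t)) 0 (2 * PI) I).
  { apply (is_RInt_ext (fun t => f (1 * t + PI))); [intros; f_equal; ring|].
    apply Haffine. unfold I.
    rewrite <- (RInt_periodic_translate f Hc Hp PI). apply RInt_ext. intros; f_equal; ring. }
  pose proof (is_RInt_scal _ _ _ (/ 4) _
    (is_RInt_plus _ _ _ _ _ _ (is_RInt_plus _ _ _ _ _ _
       (is_RInt_plus _ _ _ _ _ _ H1 H2) H3) H4)) as S.
  apply (is_RInt_unique (V:=R_CompleteNormedModule)) in S.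
  unfold scal, plus in S; simpl in S; unfold mult in S; simpl in S.
  rewrite (RInt_ext _ (fun y => / 4 * (f y + f (PI - y) + f (- y) + f (PI + y)))), S.
  - clearbody I. simpl in I. match goal with |- @eq _ ?x ?y => change (@eq R x y) end. field.
  - intros. match goal with |- @eq _ ?x ?y => change (@eq R x y) end. field.
Qed.

(** * Computation of the averaged function *)

(* The integrand W^3 F1(th, z/W) of the averaged function, simplified using
   W^2 = 1 - z^2 sin^2 th. *)
Definition avg_integrand (a b : nat -> nat -> R) (z th : R) : R :=
  W z th * (cos th * cubic_pert a (z / W z th * cos th) (z / W z th * sin th)
   + (1 - z ^ 2) * sin th * cubic_pert b (z / W z th * cos th) (z / W z th * sin th)).

Lemma avg_integrand_eq a b z s : 0 < z < 1 ->
  / (/ W z s ^ 3) * F1 a b s (rsol s z) = avg_integrand a b z s.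
Proof.
  intros Hz. pose proof (W_pos z s Hz) as Hw. pose proof (W_sq z s Hz) as Hw2.
  rewrite rsol_W, F1_polar by (apply Rgt_not_eq, Rdiv_lt_0_compat; lra).
  unfold avg_integrand.
  set (A := cubic_pert a (z / W z s * cos s) (z / W z s * sin s)).
  set (B := cubic_pert b (z / W z s * cos s) (z / W z s * sin s)).
  set (w := W z s) in *. pose proof (cos_sin_sq s) as Hcs.
  set (c := cos s) in *. set (si := sin s) in *.
  transitivity (w * (c * A * (w ^ 2 + z ^ 2 * si ^ 2)
      + si * B * (w ^ 2 - z ^ 2 * (c ^ 2 + si ^ 2) + z ^ 2 * si ^ 2))).
  - field. lra.
  - rewrite Hw2, Hcs. ring.
Qed.

Lemma avg_integrand_continuous a b z x : 0 < z < 1 -> continuous (avg_integrand a b z) x.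
Proof.
  intros Hz. apply (ex_derive_continuous (K:=R_AbsRing) (V:=R_NormedModule)).
  unfold avg_integrand, W, cubic_pert. simpl.
  pose proof (radicand_pos z x Hz) as Hq. pose proof (sqrt_lt_R0 _ Hq) as Hw.
  auto_derive.
  replace (1 + - (z * (z * 1) * (sin x * (sin x * 1)))) with (1 - z ^ 2 * sin x ^ 2) by ring.
  repeat split; lra.
Qed.

Lemma avg_integrand_periodic a b z x :
  avg_integrand a b z (x + 2 * PI) = avg_integrand a b z x.
Proof.
  unfold avg_integrand. now rewrite W_periodic, sin_2PI_periodic, cos_2PI_periodic.
Qed.

(* Coefficients of the symmetrized integrand: only the monomials
   x, x y^2, x^3 of A and y, y^3, x^2 y of B survive the symmetrization. *)
Definition alpha (a b : nat -> nat -> R) (z : R) : R :=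
  (- a 1%nat 2%nat * (1 - z ^ 2) + a 3%nat 0%nat * (1 - z ^ 2) ^ 2
   + (1 - z ^ 2) * b 0%nat 3%nat - (1 - z ^ 2) ^ 2 * b 2%nat 1%nat) / z.
Definition beta (a b : nat -> nat -> R) (z : R) : R :=
  a 1%nat 0%nat * z / 2 + a 1%nat 2%nat * (2 - z ^ 2) / (2 * z)
  + a 3%nat 0%nat * (3 * z / 2 - 1 / z)
  + (1 - z ^ 2) * (b 0%nat 1%nat * z / 2 - b 0%nat 3%nat * (1 / z + z / 2)
                   + b 2%nat 1%nat * (2 - z ^ 2) / (2 * z)).
Definition gamma (a b : nat -> nat -> R) (z : R) : R :=
  a 1%nat 0%nat * z / 2 - a 1%nat 2%nat * z / 2 + a 3%nat 0%nat * z / 2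
  + (1 - z ^ 2) * (- b 0%nat 1%nat * z / 2 + b 0%nat 3%nat * z / 2 - b 2%nat 1%nat * z / 2).

Lemma W_PI_minus z t : W z (PI - t) = W z t.
Proof. unfold W. now rewrite sin_PI_x. Qed.
Lemma W_opp z t : W z (- t) = W z t.
Proof. unfold W. rewrite sin_neg. f_equal. ring. Qed.
Lemma W_PI_plus z t : W z (PI + t) = W z t.
Proof. unfold W. rewrite Rtrigo_facts.sin_pi_plus. f_equal. ring. Qed.

Lemma avg_integrand_symmetrized a b z t : 0 < z < 1 ->
  (avg_integrand a b z t + avg_integrand a b z (PI - t)
   + avg_integrand a b z (- t) + avg_integrand a b z (PI + t)) / 4 =
  alpha a b z / (1 - z ^ 2 * sin t ^ 2) + beta a b z + gamma a b z * (cos t ^ 2 - sin t ^ 2).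
Proof.
  intros Hz. unfold avg_integrand. rewrite W_PI_minus, W_opp, W_PI_plus.
  rewrite sin_PI_x, Rtrigo_facts.cos_pi_minus, sin_neg, cos_neg,
    Rtrigo_facts.sin_pi_plus, Rtrigo_facts.cos_pi_plus.
  pose proof (W_pos z t Hz) as Hw. pose proof (radicand_pos z t Hz) as Hq.
  pose proof (W_sq z t Hz) as Hw2.
  assert (Hc2 : cos t ^ 2 = 1 - sin t ^ 2) by (pose proof (cos_sin_sq t); lra).
  set (w := W z t) in *. set (c := cos t) in *. set (s := sin t) in *.
  transitivity (a 1%nat 0%nat * z * c ^ 2 + a 1%nat 2%nat * z ^ 3 * c ^ 2 * s ^ 2 / w ^ 2
     + a 3%nat 0%nat * z ^ 3 * (c ^ 2) ^ 2 / w ^ 2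
     + (1 - z ^ 2) * (b 0%nat 1%nat * z * s ^ 2 + b 0%nat 3%nat * z ^ 3 * (s ^ 2) ^ 2 / w ^ 2
     + b 2%nat 1%nat * z ^ 3 * c ^ 2 * s ^ 2 / w ^ 2)).
  - unfold cubic_pert. simpl. field. lra.
  - rewrite Hw2, Hc2. unfold alpha, beta, gamma. field. split; lra.
Qed.

(* A 2PI-quasi-periodic primitive of 1 / (cos^2 + t^2 sin^2), for t > 0. *)
Definition atan_primitive (t th : R) : R :=
  (th - atan ((1 - t) * sin th * cos th / (cos th ^ 2 + t * sin th ^ 2))) / t.

Lemma atan_primitive_derive t th : 0 < t ->
  is_derive (atan_primitive t) th (/ (cos th ^ 2 + t ^ 2 * sin th ^ 2)).
Proof.
  intros Ht. unfold atan_primitive.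
  assert (Hc : cos th ^ 2 + sin th ^ 2 = 1) by apply cos_sin_sq.
  pose proof (pow2_ge_0 (cos th)). pose proof (pow2_ge_0 (sin th)).
  assert (HD : 0 < cos th ^ 2 + t * sin th ^ 2)
    by (destruct (Req_dec (sin th ^ 2) 0); nra).
  assert (HD2 : 0 < cos th ^ 2 + t ^ 2 * sin th ^ 2)
    by (destruct (Req_dec (sin th ^ 2) 0); nra).
  auto_derive;
    replace (cos th * (cos th * 1) + t * (sin th * (sin th * 1))) with
      (cos th ^ 2 + t * sin th ^ 2) by ring.
  - lra.
  - match goal with |- ?x = ?y => change (@eq R x y) end.
    transitivity ((cos th ^ 2 + sin th ^ 2) / (cos th ^ 2 + t ^ 2 * sin th ^ 2)).
    + field. repeat split.
      * replace (cos th ^ 2 + (t * sin th) ^ 2) with (cos th ^ 2 + t ^ 2 * sin th ^ 2)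
          by ring. lra.
      * lra.
      * lra.
      * apply Rgt_not_eq. apply Rplus_lt_le_0_compat; [nra|].
        replace ((1 - t) * sin th * cos th * ((1 - t) * sin th * cos th)) with
          (((1 - t) * sin th * cos th) ^ 2) by ring. apply pow2_ge_0.
    + rewrite Hc. field. lra.
Qed.

(* Since 1 - z^2 sin^2 = cos^2 + (1 - z^2) sin^2, the integral over a period of
   1 / (1 - z^2 sin^2) is 2PI / sqrt (1 - z^2). *)
Lemma RInt_symmetrized a b z : 0 < z < 1 ->
  RInt (fun th => alpha a b z / (1 - z ^ 2 * sin th ^ 2) + beta a b z
                  + gamma a b z * (cos th ^ 2 - sin th ^ 2)) 0 (2 * PI)
  = 2 * PI * (alpha a b z / sqrt (1 - z ^ 2) + beta a b z).
Proof.
  intros Hz.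
  assert (Hz2 : 0 < 1 - z ^ 2) by nra.
  set (t := sqrt (1 - z ^ 2)).
  assert (Ht : 0 < t) by (apply sqrt_lt_R0; lra).
  assert (Ht2 : t ^ 2 = 1 - z ^ 2) by (apply pow2_sqrt; lra).
  set (Ev := fun th => alpha a b z / (1 - z ^ 2 * sin th ^ 2) + beta a b z
                  + gamma a b z * (cos th ^ 2 - sin th ^ 2)).
  set (Fa := fun th => alpha a b z * atan_primitive t th + beta a b z * th
                       + gamma a b z * (sin th * cos th)).
  assert (HD : forall x, Rmin 0 (2 * PI) <= x <= Rmax 0 (2 * PI) -> is_derive Fa x (Ev x)).
  { intros x _. unfold Ev, Fa. auto_derive.
    - eexists. now apply atan_primitive_derive.
    - assert (DJ : Derive (fun y => atan_primitive t y) x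
                   = / (cos x ^ 2 + t ^ 2 * sin x ^ 2))
        by now apply is_derive_unique, atan_primitive_derive.
      rewrite DJ.
      replace (cos x ^ 2 + t ^ 2 * sin x ^ 2) with (1 - z ^ 2 * sin x ^ 2)
        by (rewrite Ht2; pose proof (cos_sin_sq x); nra).
      match goal with |- ?x = ?y => change (@eq R x y) end.
      field. pose proof (radicand_pos z x Hz). lra. }
  assert (HC : forall x, Rmin 0 (2 * PI) <= x <= Rmax 0 (2 * PI) -> continuous Ev x).
  { intros x _. unfold Ev. apply (ex_derive_continuous (K:=R_AbsRing) (V:=R_NormedModule)).
    auto_derive. pose proof (radicand_pos z x Hz).
    replace (1 + - (z * (z * 1) * (sin x * (sin x * 1)))) with (1 - z ^ 2 * sin x ^ 2) by ring.
    lra. }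
  fold Ev. rewrite (is_RInt_unique _ _ _ _ (is_RInt_derive _ _ _ _ HD HC)).
  unfold Fa, atan_primitive, minus, plus, opp; simpl.
  rewrite sin_2PI, cos_2PI, sin_0, cos_0.
  replace ((1 - t) * 0 * 1 / (1 * (1 * 1) + t * (0 * (0 * 1)))) with 0 by (field; lra).
  rewrite atan_0. field. lra.
Qed.

Lemma RInt_avg_integrand a b z : 0 < z < 1 ->
  RInt (avg_integrand a b z) 0 (2 * PI)
  = 2 * PI * (alpha a b z / sqrt (1 - z ^ 2) + beta a b z).
Proof.
  intros Hz.
  rewrite <- (RInt_periodic_symmetrize (avg_integrand a b z)), <- (RInt_symmetrized a b z Hz).
  - apply RInt_ext. intros. now apply avg_integrand_symmetrized.
  - intros; now apply avg_integrand_continuous.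
  - apply avg_integrand_periodic.
Qed.

Lemma f1_closed_form a b rr Y z : ivp_solutions rr Y -> 0 < z < 1 ->
  f1 a b rr Y z = 2 * PI * (alpha a b z / sqrt (1 - z ^ 2) + beta a b z).
Proof.
  intros H Hz. destruct (ivp_solutions_explicit rr Y z H Hz) as [Hr HY].
  unfold f1. rewrite <- (RInt_avg_integrand a b z Hz), HY.
  assert (W z (2 * PI) = 1) as -> by (rewrite <- (Rplus_0_l (2 * PI)), W_periodic; apply W_0).
  replace (/ 1 ^ 3) with 1 by field. rewrite Rmult_1_l.
  apply RInt_ext. intros x _. rewrite HY, Hr. now apply avg_integrand_eq.
Qed.

(** * The averaged function as a cubic in s = sqrt (1 - z^2) *)

Definition s_of (z : R) : R := sqrt (1 - z ^ 2).

Lemma s_of_props z : 0 < z < 1 -> 0 < s_of z < 1 /\ s_of z ^ 2 = 1 - z ^ 2.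
Proof.
  intros Hz. assert (Hz2 : 0 < 1 - z ^ 2) by nra. unfold s_of.
  pose proof (sqrt_lt_R0 _ Hz2). pose proof (pow2_sqrt (1 - z ^ 2) ltac:(lra)).
  split; [split|]; auto. nra.
Qed.

Lemma s_of_inj z1 z2 : 0 < z1 < 1 -> 0 < z2 < 1 -> z1 <> z2 -> s_of z1 <> s_of z2.
Proof.
  intros H1 H2 D E. destruct (s_of_props z1 H1) as [_ S1]. destruct (s_of_props z2 H2) as [_ S2].
  rewrite E in S1. rewrite S1 in S2. apply D. nra.
Qed.

Lemma s_of_value z t : 0 < z -> 0 < t -> z ^ 2 + t ^ 2 = 1 -> s_of z = t.
Proof. intros. unfold s_of. replace (1 - z ^ 2) with (t ^ 2) by lra. apply sqrt_pow2; lra. Qed.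

Lemma s_of_preimage z z0 t0 : 0 < z < 1 -> 0 < z0 -> t0 ^ 2 + z0 ^ 2 = 1 ->
  s_of z = t0 -> z = z0.
Proof.
  intros Hz H0 H1 E. destruct (s_of_props z Hz) as [_ S]. rewrite E in S.
  assert (X : (z - z0) * (z + z0) = 0) by nra.
  apply Rmult_integral in X. destruct X; lra.
Qed.

Definition Pc (a b : nat -> nat -> R) (t : R) : R :=
  (b 0%nat 1%nat - b 0%nat 3%nat - b 2%nat 1%nat) * t ^ 3
  + (b 0%nat 1%nat - 2 * a 3%nat 0%nat - b 0%nat 3%nat + b 2%nat 1%nat) * t ^ 2
  + (a 1%nat 0%nat - a 1%nat 2%nat + a 3%nat 0%nat + 2 * b 0%nat 3%nat) * t
  + (a 1%nat 0%nat + a 1%nat 2%nat + a 3%nat 0%nat).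

Definition dPc (a b : nat -> nat -> R) (t : R) : R :=
  3 * (b 0%nat 1%nat - b 0%nat 3%nat - b 2%nat 1%nat) * t ^ 2
  + 2 * (b 0%nat 1%nat - 2 * a 3%nat 0%nat - b 0%nat 3%nat + b 2%nat 1%nat) * t
  + (a 1%nat 0%nat - a 1%nat 2%nat + a 3%nat 0%nat + 2 * b 0%nat 3%nat).

(* The formula of the theorem, with 1 - z^2 = s^2 eliminated in favour of s. *)
Lemma z_f1_formula a b rr Y z : ivp_solutions rr Y -> 0 < z < 1 ->
  z * f1 a b rr Y z = f1_formula a b z.
Proof.
  intros H Hz. rewrite (f1_closed_form a b rr Y z H Hz). unfold f1_formula. cbv zeta.
  destruct (s_of_props z Hz) as [[Ht _] Ht2]. unfold s_of in *.
  set (t := sqrt (1 - z ^ 2)) in *.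
  assert (Hz2 : z ^ 2 = 1 - t ^ 2) by lra.
  unfold alpha, beta.
  transitivity (2 * PI * ((- a 1%nat 2%nat * (1 - z ^ 2) + a 3%nat 0%nat * (1 - z ^ 2) ^ 2
   + (1 - z ^ 2) * b 0%nat 3%nat - (1 - z ^ 2) ^ 2 * b 2%nat 1%nat) / t
   + a 1%nat 0%nat * z ^ 2 / 2 + a 1%nat 2%nat * (2 - z ^ 2) / 2
   + a 3%nat 0%nat * (3 * z ^ 2 / 2 - 1)
   + (1 - z ^ 2) * (b 0%nat 1%nat * z ^ 2 / 2 - b 0%nat 3%nat * (1 + z ^ 2 / 2)
                   + b 2%nat 1%nat * (2 - z ^ 2) / 2))).
  - field. lra.
  - rewrite Hz2. field. lra.
Qed.

Definition f1_factored (a b : nat -> nat -> R) (z : R) : R :=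
  PI * (1 - s_of z) * Pc a b (s_of z) / z.

Lemma f1_eq_factored a b rr Y z : ivp_solutions rr Y -> 0 < z < 1 ->
  f1 a b rr Y z = f1_factored a b z.
Proof.
  intros H Hz. apply (Rmult_eq_reg_l z); [|lra].
  rewrite (z_f1_formula a b rr Y z H Hz).
  unfold f1_factored, f1_formula, Pc, s_of. cbv zeta. field. lra.
Qed.

Lemma f1_locally_factored a b rr Y z : ivp_solutions rr Y -> 0 < z < 1 ->
  locally z (fun x => f1_factored a b x = f1 a b rr Y x).
Proof.
  intros H Hz. apply (locally_interval _ z 0 1); simpl; try lra.
  intros y H1 H2. symmetry. apply f1_eq_factored; auto.
Qed.

(* Zeros of f1 in (0,1) correspond to zeros of Pc in (0,1), since s < 1. *)
Lemma f1_zero_Pc a b rr Y z : ivp_solutions rr Y -> 0 < z < 1 -> f1 a b rr Y z = 0 ->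
  Pc a b (s_of z) = 0.
Proof.
  intros H Hz E. rewrite f1_eq_factored in E by auto. unfold f1_factored in E.
  destruct (s_of_props z Hz) as [[T1 T2] _]. pose proof PI_RGT_0.
  assert (X : PI * (1 - s_of z) * Pc a b (s_of z) = 0).
  { replace (PI * (1 - s_of z) * Pc a b (s_of z))
      with (PI * (1 - s_of z) * Pc a b (s_of z) / z * z) by (field; lra).
    rewrite E. ring. }
  apply Rmult_integral in X. destruct X as [X|X]; auto.
  apply Rmult_integral in X. destruct X; lra.
Qed.

Lemma f1_factored_derive a b z : 0 < z < 1 ->
  is_derive (f1_factored a b) z
    (PI * (s_of z - 1) * dPc a b (s_of z) / s_of z
     + PI * (z ^ 2 / s_of z - (1 - s_of z)) * Pc a b (s_of z) / z ^ 2).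
Proof.
  intros Hz. destruct (s_of_props z Hz) as [[Ht _] Ht2].
  assert (Hz2 : 0 < 1 - z ^ 2) by nra.
  unfold f1_factored, s_of in *. unfold Pc, dPc.
  auto_derive.
  - replace (1 + - (z * (z * 1))) with (1 - z ^ 2) by ring. repeat split; lra.
  - replace (1 + - (z * (z * 1))) with (1 - z ^ 2) by ring.
    match goal with |- ?x = ?y => change (@eq R x y) end.
    field. lra.
Qed.

Lemma f1_simple_zero_of_root a b rr Y z : ivp_solutions rr Y -> 0 < z < 1 ->
  Pc a b (s_of z) = 0 -> dPc a b (s_of z) <> 0 -> simple_zero (f1 a b rr Y) z.
Proof.
  intros H Hz HP HdP. destruct (s_of_props z Hz) as [[Ht Ht1] _].
  split.
  - rewrite f1_eq_factored by auto. unfold f1_factored. rewrite HP. field. lra.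
  - eexists. split.
    + apply (is_derive_ext_loc _ _ _ _ (f1_locally_factored a b rr Y z H Hz)).
      apply f1_factored_derive, Hz.
    + rewrite HP, Rmult_0_r, Rdiv_0_l, Rplus_0_r. pose proof PI_RGT_0. unfold Rdiv.
      apply Rmult_integral_contrapositive_currified;
        [apply Rmult_integral_contrapositive_currified;
         [apply Rmult_integral_contrapositive_currified|]|]; try lra.
      apply Rinv_neq_0_compat. lra.
Qed.

(** * At most three simple zeros *)

(* A polynomial of degree at most 3 with four distinct roots is zero; the proof
   takes successive divided differences. *)
Lemma cubic_four_roots c3 c2 c1 c0 t1 t2 t3 t4 :
  t1 <> t2 -> t1 <> t3 -> t1 <> t4 -> t2 <> t3 -> t2 <> t4 -> t3 <> t4 ->
  c3 * t1 ^ 3 + c2 * t1 ^ 2 + c1 * t1 + c0 = 0 ->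
  c3 * t2 ^ 3 + c2 * t2 ^ 2 + c1 * t2 + c0 = 0 ->
  c3 * t3 ^ 3 + c2 * t3 ^ 2 + c1 * t3 + c0 = 0 ->
  c3 * t4 ^ 3 + c2 * t4 ^ 2 + c1 * t4 + c0 = 0 ->
  c3 = 0 /\ c2 = 0 /\ c1 = 0 /\ c0 = 0.
Proof.
  intros d12 d13 d14 d23 d24 d34 E1 E2 E3 E4.
  assert (cancel : forall u v e, u <> v -> (u - v) * e = 0 -> e = 0).
  { intros u v e D X. apply Rmult_integral in X. destruct X; [lra | assumption]. }
  assert (dd1 : forall u v, u <> v ->
     c3 * u ^ 3 + c2 * u ^ 2 + c1 * u + c0 = 0 ->
     c3 * v ^ 3 + c2 * v ^ 2 + c1 * v + c0 = 0 ->
     c3 * (u ^ 2 + u * v + v ^ 2) + c2 * (u + v) + c1 = 0).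
  { intros u v D Eu Ev. apply (cancel u v); [exact D|].
    transitivity ((c3 * u ^ 3 + c2 * u ^ 2 + c1 * u + c0)
                  - (c3 * v ^ 3 + c2 * v ^ 2 + c1 * v + c0)); [ring | lra]. }
  assert (dd2 : forall v w, v <> w ->
     c3 * (t1 ^ 2 + t1 * v + v ^ 2) + c2 * (t1 + v) + c1 = 0 ->
     c3 * (t1 ^ 2 + t1 * w + w ^ 2) + c2 * (t1 + w) + c1 = 0 ->
     c3 * (t1 + v + w) + c2 = 0).
  { intros v w D Ev Ew. apply (cancel v w); [exact D|].
    transitivity ((c3 * (t1 ^ 2 + t1 * v + v ^ 2) + c2 * (t1 + v) + c1)
                  - (c3 * (t1 ^ 2 + t1 * w + w ^ 2) + c2 * (t1 + w) + c1)); [ring | lra]. }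
  pose proof (dd1 _ _ d12 E1 E2) as Q12. pose proof (dd1 _ _ d13 E1 E3) as Q13.
  pose proof (dd1 _ _ d14 E1 E4) as Q14.
  pose proof (dd2 _ _ d23 Q12 Q13) as R23. pose proof (dd2 _ _ d24 Q12 Q14) as R24.
  assert (C3 : c3 = 0).
  { apply (cancel t3 t4); [exact d34|].
    transitivity ((c3 * (t1 + t2 + t3) + c2) - (c3 * (t1 + t2 + t4) + c2)); [ring | lra]. }
  subst c3. assert (C2 : c2 = 0) by lra. subst c2. assert (C1 : c1 = 0) by lra. subst c1.
  repeat split; lra.
Qed.

Lemma f1_degenerate_no_simple_zero a b rr Y z : ivp_solutions rr Y -> 0 < z < 1 ->
  (forall t, Pc a b t = 0) -> ~ simple_zero (f1 a b rr Y) z.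
Proof.
  intros H Hz HP [_ [l [Dl Hl]]]. apply Hl.
  assert (Hloc : locally z (fun x => (fun _ : R => 0) x = f1 a b rr Y x)).
  { apply (locally_interval _ z 0 1); simpl; try lra.
    intros y Y1 Y2. rewrite f1_eq_factored by (auto; lra). unfold f1_factored.
    rewrite HP. field. lra. }
  assert (D0 : is_derive (f1 a b rr Y) z 0).
  { apply (is_derive_ext_loc _ _ _ _ Hloc). apply (is_derive_const (K:=R_AbsRing) 0 z). }
  apply is_derive_unique in D0. apply is_derive_unique in Dl. congruence.
Qed.

Lemma at_most_three_simple_zeros a b rr Y (l : list R) : ivp_solutions rr Y -> NoDup l ->
  (forall z, In z l -> 0 < z < 1 /\ simple_zero (f1 a b rr Y) z) -> (length l <= 3)%nat.
Proof.
  intros H ND Hl.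
  destruct l as [|z1 [|z2 [|z3 [|z4 l']]]]; simpl; try lia. exfalso.
  apply NoDup_cons_iff in ND. destruct ND as [N1 ND].
  apply NoDup_cons_iff in ND. destruct ND as [N2 ND].
  apply NoDup_cons_iff in ND. destruct ND as [N3 _].
  assert (d12 : z1 <> z2) by (intro; apply N1; subst; simpl; auto).
  assert (d13 : z1 <> z3) by (intro; apply N1; subst; simpl; auto).
  assert (d14 : z1 <> z4) by (intro; apply N1; subst; simpl; auto).
  assert (d23 : z2 <> z3) by (intro; apply N2; subst; simpl; auto).
  assert (d24 : z2 <> z4) by (intro; apply N2; subst; simpl; auto).
  assert (d34 : z3 <> z4) by (intro; apply N3; subst; simpl; auto).
  destruct (Hl z1 ltac:(simpl; auto)) as [I1 S1].
  destruct (Hl z2 ltac:(simpl; auto)) as [I2 [Z2 _]].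
  destruct (Hl z3 ltac:(simpl; auto)) as [I3 [Z3 _]].
  destruct (Hl z4 ltac:(simpl; auto)) as [I4 [Z4 _]].
  pose proof (f1_zero_Pc a b rr Y z1 H I1 (proj1 S1)) as P1.
  apply (f1_zero_Pc a b rr Y) in Z2, Z3, Z4; auto. unfold Pc in P1, Z2, Z3, Z4.
  destruct (cubic_four_roots _ _ _ _ _ _ _ _ (s_of_inj _ _ I1 I2 d12) (s_of_inj _ _ I1 I3 d13)
     (s_of_inj _ _ I1 I4 d14) (s_of_inj _ _ I2 I3 d23) (s_of_inj _ _ I2 I4 d24)
     (s_of_inj _ _ I3 I4 d34) P1 Z2 Z3 Z4) as [C3 [C2 [C1 C0]]].
  apply (f1_degenerate_no_simple_zero a b rr Y z1 H I1); [|exact S1].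
  intro t. unfold Pc. rewrite C3, C2, C1, C0. ring.
Qed.

(** * Three simple zeros are attained *)

(* Coefficients for which Pc = 325 (s - 5/13)(s - 3/5)(s - 4/5); the roots
   s = 4/5, 3/5, 5/13 correspond to z = 3/5, 4/5, 12/13. *)
Definition a_example (i j : nat) : R :=
  match i, j with 1%nat, 0%nat => 271 / 2 | 1%nat, 2%nat => - 391 / 2 | _, _ => 0 end.
Definition b_example (i j : nat) : R :=
  match i, j with 0%nat, 1%nat => - 255 / 2 | 2%nat, 1%nat => - 905 / 2 | _, _ => 0 end.

Lemma Pc_example t :
  Pc a_example b_example t = 325 * (t - 5 / 13) * (t - 3 / 5) * (t - 4 / 5).
Proof. unfold Pc; cbn [a_example b_example]. field. Qed.

Lemma example_simple_zero rr Y z s : ivp_solutions rr Y -> 0 < z -> 0 < s ->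
  z ^ 2 + s ^ 2 = 1 -> (s = 5 / 13 \/ s = 3 / 5 \/ s = 4 / 5) ->
  simple_zero (f1 a_example b_example rr Y) z.
Proof.
  intros H Hz Hs Hzs Hroot.
  assert (Hz1 : 0 < z < 1) by (split; [lra | nra]).
  apply (f1_simple_zero_of_root a_example b_example rr Y z H Hz1);
    rewrite (s_of_value z s Hz Hs Hzs).
  - rewrite Pc_example. destruct Hroot as [-> | [-> | ->]]; field.
  - unfold dPc; cbn [a_example b_example].
    destruct Hroot as [-> | [-> | ->]]; cbn [pow]; lra.
Qed.

Lemma three_simple_zeros_attained rr Y : ivp_solutions rr Y ->
  exists a b z1 z2 z3,
    0 < z1 < z2 /\ z2 < z3 < 1 /\
    simple_zero (f1 a b rr Y) z1 /\ simple_zero (f1 a b rr Y) z2 /\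
    simple_zero (f1 a b rr Y) z3 /\
    (forall z, 0 < z < 1 -> simple_zero (f1 a b rr Y) z -> z = z1 \/ z = z2 \/ z = z3).
Proof.
  intros H. exists a_example, b_example, (3 / 5), (4 / 5), (12 / 13).
  split; [lra|]. split; [lra|].
  split; [|split; [|split]].
  - apply (example_simple_zero rr Y _ (4 / 5) H); cbn [pow]; lra.
  - apply (example_simple_zero rr Y _ (3 / 5) H); cbn [pow]; lra.
  - apply (example_simple_zero rr Y _ (5 / 13) H); cbn [pow]; lra.
  - intros z Hz [Z0 _]. pose proof (f1_zero_Pc _ _ rr Y z H Hz Z0) as Z.
    rewrite Pc_example in Z.
    apply Rmult_integral in Z. destruct Z as [Z|Z].
    + apply Rmult_integral in Z. destruct Z as [Z|Z].
      * apply Rmult_integral in Z. destruct Z as [Z|Z]; [lra|].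
        right; right. apply (s_of_preimage z (12 / 13) (5 / 13)); lra.
      * right; left. apply (s_of_preimage z (4 / 5) (3 / 5)); lra.
    + left. apply (s_of_preimage z (3 / 5) (4 / 5)); lra.
Qed.

Theorem mainTheorem5 :
  (* the unperturbed equation is dr/dth = r^3 cos th sin th *)
  (forall th r, r <> 0 -> F0 th r = r ^ 3 * cos th * sin th) /\
  (* r(th,z) = z / sqrt(1 - z^2 sin^2 th) solves it with r(0,z) = z *)
  (forall z, 0 < z < 1 ->
     rsol 0 z = z /\
     (forall th, is_derive (fun t => rsol t z) th (F0 th (rsol th z))) /\
     (forall th, rsol (th + 2 * PI) z = rsol th z)) /\
  (* it is defined and positive for all th exactly when z is in D = (0,1) *)
  (forall z, (0 < z < 1) <->
     (forall th, 0 < 1 - z ^ 2 * (sin th) ^ 2 /\ 0 < rsol th z)) /\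
  (* for any solutions r(th,z), Y(th,z) of the defining initial value problems: *)
  (forall rr Y : R -> R -> R,
     (forall z, 0 < z < 1 ->
        rr 0 z = z /\
        (forall th, is_derive (fun t => rr t z) th (F0 th (rr th z))) /\
        Y 0 z = 1 /\
        (forall th, is_derive (fun t => Y t z) th
                      (Derive (fun r => F0 th r) (rr th z) * Y th z))) ->
     (* the formula for z f1(z) *)
     (forall a b z, 0 < z < 1 -> z * f1 a b rr Y z = f1_formula a b z) /\
     (* at most 3 simple zeros in (0,1) *)
     (forall a b (l : list R), NoDup l ->
        (forall z, In z l -> 0 < z < 1 /\ simple_zero (f1 a b rr Y) z) ->
        (length l <= 3)%nat) /\
     (* and exactly 3 is attained *)
     (exists a b z1 z2 z3,
        0 < z1 < z2 /\ z2 < z3 < 1 /\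
        simple_zero (f1 a b rr Y) z1 /\ simple_zero (f1 a b rr Y) z2 /\
        simple_zero (f1 a b rr Y) z3 /\
        (forall z, 0 < z < 1 -> simple_zero (f1 a b rr Y) z ->
           z = z1 \/ z = z2 \/ z = z3))).
Proof.
  split; [intros th r _; apply F0_polar|].
  split.
  { intros z Hz. split; [apply rsol_0|]. split.
    - intro th. now apply rsol_solves.
    - intro th. now rewrite !rsol_W, W_periodic. }
  split; [apply rsol_domain|].
  intros rr Y H. change (ivp_solutions rr Y) in H.
  split; [|split].
  - intros a b z Hz. now apply z_f1_formula.
  - intros a b l ND Hl. now apply (at_most_three_simple_zeros a b rr Y l).
  - now apply three_simple_zeros_attained.
Qed.
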